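(* Let $N\ge 1$, $k\ge 1$ and $1\le m\le k$ be integers. For each $n\in\{m,\ldots,k\}$ let $\mathcal{Q}^{(n)}=\left(q^{(n)}_1,\ldots,q^{(n)}_{N^n}\right)$ be a tuple of vectors $q^{(n)}_l\in\Delta^N$. Define $N\times N$ matrices recursively by $\overline{Q}^{(k+1)}_i:=E_N$ for $1\le i\le N^k$, and, for $n=k,k-1,\ldots,m$ and $1\le i\le N^{n-1}$, $$\overline{Q}^{(n)}_i:=\left(\overline{Q}^{(n+1)}_{N(i-1)+1}\,q^{(n)}_{N(i-1)+1},\ \overline{Q}^{(n+1)}_{N(i-1)+2}\,q^{(n)}_{N(i-1)+2},\ \ldots,\ \overline{Q}^{(n+1)}_{N(i-1)+N}\,q^{(n)}_{N(i-1)+N}\right).$$ Then $$\mathcal{S}\left(\mathcal{Q}^{(m)},\ldots,\mathcal{Q}^{(k)}\right)=C^{(m)}_1\sum_{i=1}^{N^{m-1}}E_{N^{m-1},i}\otimes\overline{Q}^{(m)}_i.$$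
   Context: $\Delta^{n}$ denotes the set of probability vectors in $\mathbb{R}^n$ (column vectors with nonnegative entries summing to $1$). $E_n$ is the $n\times n$ identity matrix, $e_{n,i}$ the $i$-th standard basis column vector of $\mathbb{R}^n$, $E_{n,i}:=e_{n,i}e_{n,i}^{T}$, $\mathbf{1}_n\in\mathbb{R}^n$ the all-ones vector, and $\otimes$ the Kronecker product. The commutation matrix is $C_{n,m}:=\sum_{i=1}^{m}e_{m,i}^{T}\otimes E_n\otimes e_{m,i}$. For integers $k\ge 0$ and $0\le m\le k$ (with $N$ fixed): $M^{(k)}_m:=E_{N^m}\otimes\mathbf{1}_N^{T}\otimes E_{N^{k-m}}\in\mathbb{R}^{N^k\times N^{k+1}}$; for a tuple $\mathcal{Q}=(q_1,\ldots,q_{N^k})$ of vectors in $\Delta^N$, $B^{(k)}_m(\mathcal{Q}):=\sum_{i=1}^{N^m}\sum_{j=1}^{N^{k-m}}E_{N^m,i}\otimes q_{N^{k-m}(i-1)+j}\otimes E_{N^{k-m},j}\in\mathbb{R}^{N^{k+1}\times N^k}$; $C^{(k)}_m:=C_{N^m,N^{k-m}}$. The shift matrix of tuples $\mathcal{Q}^{(m)},\ldots,\mathcal{Q}^{(k)}$ (where $\mathcal{Q}^{(n)}$ has $N^n$ entries) is the $N^m\times N^m$ matrix $$\mathcal{S}\left(\mathcal{Q}^{(m)},\ldots,\mathcal{Q}^{(k)}\right):=M^{(m)}_m M^{(m+1)}_{m+1}\cdots M^{(k)}_k\,C^{(k+1)}_1\,B^{(k)}_k\left(\mathcal{Q}^{(k)}\right)B^{(k-1)}_{k-1}\left(\mathcal{Q}^{(k-1)}\right)\cdots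 B^{(m)}_m\left(\mathcal{Q}^{(m)}\right).$$ *)

(* Kronecker product = mathcomp-real-closed's [tensmx]
   (row/column index of (A *t B) at (i,j) is  i * p + j, the standard
   Kronecker convention). *)
From HB Require Import structures.
From mathcomp Require Import all_boot all_order all_algebra.
From mathcomp Require Export mxtens.
Set Implicit Arguments. Unset Strict Implicit. Unset Printing Implicit Defensive.
Import Order.TTheory GRing.Theory Num.Theory.
Local Open Scope ring_scope.

Section Defs.
Variable R : realFieldType.
Variable N : nat.

Definition prob_vec (v : 'cV[R]_N) : Prop :=
  (forall i, 0 <= v i 0) /\ \sum_(i < N) v i 0 = 1.

Definition kron {m n p q : nat} (A : 'M[R]_(m, n)) (B : 'M[R]_(p, q)) :
  'M[R]_(m * p, n * q) := tensmx A B.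

Definition Emx (n : nat) (i : 'I_n) : 'M[R]_n := delta_mx i i.

Definition commmx (n m : nat) : 'M[R]_(1 * n * m, m * n * 1) :=
  \sum_(i < m) kron (kron (delta_mx 0 i : 'M[R]_(1, m)) (1%:M : 'M[R]_n))
                    (delta_mx i 0 : 'M[R]_(m, 1)).

Lemma dim_eq1 (k m : nat) : (m <= k)%N -> (N ^ m * 1 * N ^ (k - m) = N ^ k)%N.
Proof. by move=> H; rewrite muln1 -expnD subnKC. Qed.
Lemma dim_eq2 (k m : nat) : (m <= k)%N -> (N ^ m * N * N ^ (k - m) = N ^ k.+1)%N.
Proof. by move=> H; rewrite -expnSr -expnD addSn subnKC. Qed.
Lemma dim_eq3 (k m : nat) : (m <= k)%N -> (N ^ m * N ^ (k - m) = N ^ k)%N.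
Proof. by move=> H; rewrite -expnD subnKC. Qed.
Lemma dim_eq4 (k m : nat) : (m <= k)%N -> (1 * N ^ m * N ^ (k - m) = N ^ k)%N.
Proof. by move=> H; rewrite mul1n -expnD subnKC. Qed.
Lemma dim_eq5 (k m : nat) : (m <= k)%N -> (N ^ (k - m) * N ^ m * 1 = N ^ k)%N.
Proof. by move=> H; rewrite muln1 -expnD subnK. Qed.

Definition Mmx (k m : nat) (H : (m <= k)%N) : 'M[R]_(N ^ k, N ^ k.+1) :=
  castmx (dim_eq1 H, dim_eq2 H)
    (kron (kron (1%:M : 'M[R]_(N ^ m)) (const_mx 1 : 'M[R]_(1, N)))
          (1%:M : 'M[R]_(N ^ (k - m)))).

(* B^{(k)}_m(Q), Q = (q_1,...,q_{N^k}) given as a function on 'I_(N^k)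
   (0-based: q_{N^{k-m}(i-1)+j} becomes Q (N^{k-m} i + j)) *)
Definition Bmx (k m : nat) (H : (m <= k)%N) (Q : 'I_(N ^ k) -> 'cV[R]_N) :
  'M[R]_(N ^ k.+1, N ^ k) :=
  castmx (dim_eq2 H, dim_eq1 H)
    (\sum_(i < N ^ m) \sum_(j < N ^ (k - m))
        kron (kron (Emx i) (Q (cast_ord (dim_eq3 H) (mxtens_index (i, j)))))
             (Emx j)).

Definition Cmx (k m : nat) (H : (m <= k)%N) : 'M[R]_(N ^ k) :=
  castmx (dim_eq4 H, dim_eq5 H) (commmx (N ^ m) (N ^ (k - m))).

(* A family of tuples: Qs n l = q^{(n)}_{l+1} (0-based index l < N^n). *)
Definition tupleQ (Qs : nat -> nat -> 'cV[R]_N) (n : nat) : 'I_(N ^ n) -> 'cV[R]_N :=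
  fun l => Qs n l.
Arguments tupleQ : clear implicits.

(* Mprod n j = M^{(n)}_n M^{(n+1)}_{n+1} ... M^{(n+j)}_{n+j} *)
Fixpoint Mprod (n j : nat) : 'M[R]_(N ^ n, N ^ (n + j).+1) :=
  match j with
  | 0 => castmx (erefl, congr1 (fun x => N ^ x.+1)%N (esym (addn0 n)))
                (Mmx (leqnn n))
  | j'.+1 => Mmx (leqnn n) *m
       castmx (erefl, congr1 (fun x => N ^ x.+1)%N (addSnnS n j')) (Mprod n.+1 j')
  end.

(* Bprod Qs n j = B^{(n+j)}_{n+j}(Q^{(n+j)}) ... B^{(n)}_n(Q^{(n)}) *)
Fixpoint Bprod (Qs : nat -> nat -> 'cV[R]_N) (n j : nat) :
    'M[R]_(N ^ (n + j).+1, N ^ n) :=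
  match j with
  | 0 => castmx (congr1 (fun x => N ^ x.+1)%N (esym (addn0 n)), erefl)
                (Bmx (leqnn n) (tupleQ Qs n))
  | j'.+1 =>
      castmx (congr1 (fun x => N ^ x.+1)%N (addSnnS n j'), erefl) (Bprod Qs n.+1 j')
        *m Bmx (leqnn n) (tupleQ Qs n)
  end.

Lemma dim_eq6 (m k : nat) : (m <= k)%N -> (N ^ (m + (k - m)).+1 = N ^ k.+1)%N.
Proof. by move=> H; rewrite subnKC. Qed.

Definition shiftmx (Qs : nat -> nat -> 'cV[R]_N) (m k : nat) (H : (m <= k)%N) :
    'M[R]_(N ^ m) :=
  castmx (erefl, dim_eq6 H) (Mprod m (k - m))
  *m Cmx (isT : (1 <= k.+1)%N)
  *m castmx (dim_eq6 H, erefl) (Bprod Qs m (k - m)).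

(* Qbar d i = \overline{Q}^{(k+1-d)}_{i+1}  (0-based index i).
   d = 0 : level k+1, identity; step d -> d+1 goes from level n+1 to n. *)
Fixpoint Qbar (Qs : nat -> nat -> 'cV[R]_N) (k d : nat) (i : nat) : 'M[R]_N :=
  match d with
  | 0 => 1%:M
  | d'.+1 =>
      \matrix_(r < N, c < N)
         ((Qbar Qs k d' (N * i + c) *m Qs (k - d')%N (N * i + c)) r 0)
  end.

Definition QbarL (Qs : nat -> nat -> 'cV[R]_N) (k n i : nat) : 'M[R]_N :=
  Qbar Qs k (k.+1 - n) i.

Lemma dim_eq7 (m : nat) : (1 <= m)%N -> (N ^ (m - 1) * N = N ^ m)%N.
Proof. by move=> H; rewrite -expnSr subn1 prednK. Qed.

Definition Qbar_sum (Qs : nat -> nat -> 'cV[R]_N) (k m : nat) (H : (1 <= m)%N) :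
    'M[R]_(N ^ m) :=
  castmx (dim_eq7 H, dim_eq7 H)
    (\sum_(i < N ^ (m - 1)) kron (Emx i) (QbarL Qs k m i)).

End Defs.
Arguments tupleQ {R N} Qs n.

(* Both sides are compared entrywise, reading matrices as functions on nat * nat
   that vanish outside their dimensions, so that all dimension casts disappear.
   In these coordinates the product of the M's is the indicator of
   [a = x / N^(j+1)], the product of the B's is supported on [y / N^(j+1) = x],
   and summing it over all base-N digits of the row index except the lowest one
   gives an entry of Qbar: each summation step is one step of the recursion
   defining Qbar.  The commutation matrices C^(k+1)_1 and C^(m)_1 move the lowest
   base-N digit to the top, after which both sides reduce to
   [a mod N^(m-1) = a' / N] * Qbar^(m)_(a' / N) (a / N^(m-1), a' mod N).
   The identity is purely algebraic: the q's need not be probability vectors. *)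

From HB Require Import structures.
From mathcomp Require Import all_boot all_order all_algebra.
Import Order.TTheory GRing.Theory Num.Theory.

Lemma ltn_mulD (r b n d : nat) : r < n -> b < d -> r * d + b < n * d.
Proof.
move=> ltrn ltbd; apply: (@leq_trans (r * d + d)); first by rewrite ltn_add2l.
by rewrite -mulSnr leq_mul2r ltrn orbT.
Qed.

Lemma eqn_divmod (a r b d : nat) :
  b < d -> (a == r * d + b) = (r == a %/ d) && (a %% d == b).
Proof.
move=> ltbd; have d_gt0 : 0 < d by apply: leq_ltn_trans ltbd.
apply/eqP/andP => [->|[/eqP -> /eqP <-]]; last by rewrite -divn_eq.
by rewrite divnMDl // divn_small // addn0 modnMDl modn_small.
Qed.

Local Open Scope ring_scope.

Section NatSums.
Variable R : ringType.
Implicit Types F : nat -> R.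

Lemma sum_nat_indicator (n c : nat) F :
  \sum_(0 <= l < n) ((l == c)%:R * F l) = if (c < n)%N then F c else 0.
Proof.
rewrite (eq_bigr (fun l => if l == c then F l else 0)) => [|l _].
  by rewrite -big_mkcond big_nat1_eq.
by rewrite mulr_natl mulrb.
Qed.

Lemma sum_nat_mul_split a n F :
  \sum_(0 <= z < a * n) F z = \sum_(0 <= i < a) \sum_(0 <= c < n) F (i * n + c)%N.
Proof.
rewrite big_nat_mul; apply: eq_bigr => i _.
rewrite mulSn -[X in \sum_(X <= _ < _) _]add0n big_addn addnK.
by apply: eq_bigr => c _; rewrite addnC.
Qed.

End NatSums.

Section MatrixEntries.
Variable R : ringType.

Definition mxnth {m n} (A : 'M[R]_(m, n)) (i j : nat) : R :=
  match (insub i : option 'I_m), (insub j : option 'I_n) with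
  | Some i', Some j' => A i' j'
  | _, _ => 0
  end.

Lemma mxnthE m n (A : 'M[R]_(m, n)) (i : 'I_m) (j : 'I_n) : mxnth A i j = A i j.
Proof. by rewrite /mxnth !valK. Qed.

Lemma mxnth_out_row m n (A : 'M[R]_(m, n)) i j : (m <= i)%N -> mxnth A i j = 0.
Proof. by move=> le_mi; rewrite /mxnth insubN // -leqNgt. Qed.

Lemma mxnth_out_col m n (A : 'M[R]_(m, n)) i j : (n <= j)%N -> mxnth A i j = 0.
Proof. by move=> le_nj; rewrite /mxnth [insub j]insubN -?leqNgt //; case: insub. Qed.

Lemma eq_mx_mxnth m n (A B : 'M[R]_(m, n)) :
  (forall i j, (i < m)%N -> (j < n)%N -> mxnth A i j = mxnth B i j) -> A = B.
Proof. by move=> eqAB; apply/matrixP => i j; rewrite -!mxnthE eqAB. Qed.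

Lemma mxnth_castmx m n m' n' (eq_mn : (m = m') * (n = n')) (A : 'M[R]_(m, n)) i j :
  mxnth (castmx eq_mn A) i j = mxnth A i j.
Proof. by case: eq_mn => em en; subst; rewrite castmx_id. Qed.

Lemma mxnth_mul m n p (A : 'M[R]_(m, n)) (B : 'M[R]_(n, p)) i j :
  mxnth (A *m B) i j = \sum_(0 <= l < n) mxnth A i l * mxnth B l j.
Proof.
have [lt_im|le_mi] := ltnP i m; last first.
  by rewrite mxnth_out_row // big1 // => l _; rewrite mxnth_out_row ?mul0r.
have [lt_jp|le_pj] := ltnP j p; last first.
  by rewrite mxnth_out_col // big1 // => l _; rewrite [mxnth B _ _]mxnth_out_col ?mulr0.
rewrite -[i]/(val (Ordinal lt_im)) -[j]/(val (Ordinal lt_jp)) mxnthE mxE big_mkord.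
by apply: eq_bigr => l _; rewrite !mxnthE.
Qed.

Lemma mxnth_sum m n (I : Type) (r : seq I) (P : pred I) (F : I -> 'M[R]_(m, n)) i j :
  mxnth (\sum_(x <- r | P x) F x) i j = \sum_(x <- r | P x) mxnth (F x) i j.
Proof.
have [lt_im|le_mi] := ltnP i m; last first.
  by rewrite mxnth_out_row // big1 // => l _; rewrite mxnth_out_row.
have [lt_jn|le_nj] := ltnP j n; last first.
  by rewrite mxnth_out_col // big1 // => l _; rewrite mxnth_out_col.
rewrite -[i]/(val (Ordinal lt_im)) -[j]/(val (Ordinal lt_jn)) mxnthE summxE.
by apply: eq_bigr => l _; rewrite mxnthE.
Qed.

Lemma mxnth_tens m n p q (A : 'M[R]_(m, n)) (B : 'M[R]_(p, q)) i j :
  mxnth (A *t B) i j = mxnth A (i %/ p) (j %/ q) * mxnth B (i %% p) (j %% q).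
Proof.
have [lt_i|le_i] := ltnP i (m * p); last first.
  rewrite mxnth_out_row //; case: p B le_i => [|p] B le_i.
    by rewrite [mxnth B _ _]mxnth_out_row ?mulr0.
  by rewrite mxnth_out_row ?mul0r // leq_divRL.
have [lt_j|le_j] := ltnP j (n * q); last first.
  rewrite mxnth_out_col //; case: q B le_j => [|q] B le_j.
    by rewrite [mxnth B _ _]mxnth_out_col ?mulr0.
  by rewrite mxnth_out_col ?mul0r // leq_divRL.
rewrite -[i]/(val (Ordinal lt_i)) -[j]/(val (Ordinal lt_j)) mxnthE mxE.
by rewrite -!mxnthE.
Qed.

Lemma mxnth_delta m n (a : 'I_m) (b : 'I_n) i j :
  mxnth (delta_mx a b : 'M[R]_(m, n)) i j = ((i == a) && (j == b))%:R.
Proof.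
have [lt_im|le_mi] := ltnP i m; last first.
  by rewrite mxnth_out_row // gtn_eqF // (leq_trans (ltn_ord a)).
have [lt_jn|le_nj] := ltnP j n; last first.
  by rewrite mxnth_out_col // [j == b]gtn_eqF ?andbF // (leq_trans (ltn_ord b)).
by rewrite -[i]/(val (Ordinal lt_im)) -[j]/(val (Ordinal lt_jn)) mxnthE mxE.
Qed.

Lemma mxnth_scalar1 n i j : mxnth (1%:M : 'M[R]_n) i j = ((i == j) && (i < n)%N)%:R.
Proof.
have [lt_in|le_ni] := ltnP i n; last by rewrite mxnth_out_row // andbF.
have [lt_jn|le_nj] := ltnP j n; last first.
  by rewrite mxnth_out_col // ltn_eqF // (leq_trans lt_in).
by rewrite -[i]/(val (Ordinal lt_in)) -[j]/(val (Ordinal lt_jn)) mxnthE mxE andbT.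
Qed.

Lemma mxnth_const m n (c : R) i j :
  mxnth (const_mx c : 'M[R]_(m, n)) i j = ((i < m) && (j < n))%N%:R * c.
Proof.
have [lt_im|le_mi] := ltnP i m; last by rewrite mxnth_out_row // mul0r.
have [lt_jn|le_nj] := ltnP j n; last by rewrite mxnth_out_col // mul0r.
by rewrite -[i]/(val (Ordinal lt_im)) -[j]/(val (Ordinal lt_jn)) mxnthE mxE mul1r.
Qed.

End MatrixEntries.

Arguments mxnth {R m n}.

Section ShiftMatrixEntries.
Variables (R : realFieldType) (N : nat) (Qs : nat -> nat -> 'cV[R]_N).
Hypothesis N_gt0 : (0 < N)%N.

Lemma mxnth_Mmx n a x :
  (a < N ^ n)%N -> mxnth (Mmx R N (leqnn n)) a x = (a == x %/ N)%N%:R.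
Proof.
move=> lt_a; rewrite /Mmx mxnth_castmx /kron !mxnth_tens !mxnth_scalar1 mxnth_const.
by rewrite subnn expn0 !divn1 !modn1 lt_a ltn_pmod //= andbT !mulr1.
Qed.

Lemma mxnth_Mprod j n a x : (a < N ^ n)%N -> (x < N ^ (n + j).+1)%N ->
  mxnth (Mprod R N n j) a x = (a == x %/ N ^ j.+1)%N%:R.
Proof.
elim: j n a x => [|j IHj] n a x lt_a lt_x.
  by rewrite /= mxnth_castmx mxnth_Mmx // expn1.
rewrite /= mxnth_mul.
transitivity (\sum_(0 <= l < N ^ n.+1) ((l == x %/ N ^ j.+1)%N%:R * (a == l %/ N)%N%:R : R)).
  apply: eq_big_nat => l /andP[_ lt_l].
  rewrite mxnth_Mmx // mxnth_castmx IHj //; first exact: mulrC.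
  by rewrite addSnnS.
rewrite sum_nat_indicator ltn_divLR ?expn_gt0 ?N_gt0 // -expnD addSn lt_x.
by rewrite -divnMA -expnSr.
Qed.

Lemma mxnth_Bmx n y x : (y < N ^ n.+1)%N -> (x < N ^ n)%N ->
  mxnth (Bmx (leqnn n) (tupleQ Qs n)) y x =
  (y %/ N == x)%N%:R * mxnth (Qs n x) (y %% N)%N 0.
Proof.
move=> lt_y lt_x; rewrite /Bmx mxnth_castmx mxnth_sum.
under eq_bigr => i _ do rewrite mxnth_sum.
under eq_bigr => i _ do
  under eq_bigr => j _ do rewrite /kron !mxnth_tens /Emx !mxnth_delta /tupleQ /=.
rewrite subnn expn0 !divn1 !modn1.
under eq_bigr => i _ do rewrite big_ord1 /= muln1 addn0 mulr1.
rewrite (bigD1 (Ordinal lt_x)) //= eqxx andbT big1 ?addr0 // => i ne_ix.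
have -> : (x == i) = false by apply: contraNF ne_ix => /eqP x_i; apply/eqP/val_inj.
by rewrite andbF mul0r.
Qed.

Lemma mxnth_Bprod_eq0 j n y x : (y %/ N ^ j.+1 != x)%N -> mxnth (Bprod Qs n j) y x = 0.
Proof.
elim: j n y x => [|j IHj] n y x ne_yx.
  rewrite /= mxnth_castmx; rewrite expn1 in ne_yx.
  have [lt_y|?] := ltnP y (N ^ n.+1); last by rewrite mxnth_out_row.
  have [lt_x|?] := ltnP x (N ^ n); last by rewrite mxnth_out_col.
  by rewrite mxnth_Bmx // (negbTE ne_yx) mul0r.
rewrite /= mxnth_mul big_nat_cond big1 // => z /andP[/andP[_ lt_z] _].
rewrite mxnth_castmx; have [eq_yz|ne_yz] := eqVneq (y %/ N ^ j.+1)%N z; last first.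
  by rewrite IHj // mul0r.
have [lt_x|?] := ltnP x (N ^ n); last by rewrite [mxnth (Bmx _ _) _ _]mxnth_out_col ?mulr0.
by rewrite mxnth_Bmx // -eq_yz -divnMA -expnSr (negbTE ne_yx) mul0r mulr0.
Qed.

Lemma mxnth_QbarS k d i r c : (r < N)%N -> (c < N)%N ->
  mxnth (Qbar Qs k d.+1 i) r c =
  \sum_(0 <= l < N)
    mxnth (Qbar Qs k d (N * i + c)) r l * mxnth (Qs (k - d) (N * i + c)) l 0.
Proof.
move=> lt_r lt_c; rewrite -[r]/(val (Ordinal lt_r)) -[c]/(val (Ordinal lt_c)) !mxnthE.
by rewrite mxE -mxnthE mxnth_mul.
Qed.

Lemma sum_Bprod_low_digit k j n r x : (n + j)%N = k -> (r < N)%N -> (x < N ^ n)%N ->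
  \sum_(0 <= y < N ^ (n + j).+1) ((y %% N == r)%N%:R * mxnth (Bprod Qs n j) y x)
  = mxnth (Qbar Qs k j.+1 (x %/ N)) r (x %% N).
Proof.
have digitsK z : (N * (z %/ N) + z %% N)%N = z by rewrite mulnC -divn_eq.
elim: j n x => [|j IHj] n x def_k lt_r lt_x.
  subst k; rewrite mxnth_QbarS ?ltn_pmod // digitsK subn0 [X in Qs X]addn0.
  transitivity (\sum_(0 <= y < N ^ (n + 0).+1)
                  ((y == x * N + r)%N%:R * mxnth (Qs n x) r 0)).
    apply: eq_big_nat => y /andP[_ lt_y]; rewrite addn0 in lt_y.
    rewrite /= mxnth_castmx mxnth_Bmx // (eqn_divmod _ _ _ _ lt_r) [x == _]eq_sym.
    by case: eqP => [->|_]; case: eqP; rewrite ?mul1r ?mul0r ?mulr0.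
  rewrite sum_nat_indicator addn0 expnSr ltn_mulD //.
  transitivity (\sum_(0 <= l < N) ((l == r)%N%:R * mxnth (Qs n x) l 0)).
    by rewrite sum_nat_indicator lt_r.
  by apply: eq_big_nat => l _; rewrite mxnth_scalar1 eq_sym lt_r andbT.
have def_k' : (n.+1 + j)%N = k by rewrite addSnnS.
transitivity (\sum_(0 <= z < N ^ n.+1) (mxnth (Qbar Qs k j.+1 (z %/ N)) r (z %% N) *
                 mxnth (Bmx (leqnn n) (tupleQ Qs n)) z x)).
  under eq_bigr => y _ do rewrite /= mxnth_mul big_distrr.
  under eq_bigr => y _ do under eq_bigr => z _ do rewrite mxnth_castmx.
  rewrite -addSnnS exchange_big_nat; apply: eq_big_nat => z /andP[_ lt_z].
  rewrite -(IHj n.+1 z def_k' lt_r lt_z) big_distrl; apply: eq_bigr => y _.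
  exact: mulrA.
transitivity (\sum_(0 <= i < N ^ n) ((i == x)%:R *
    \sum_(0 <= c < N) (mxnth (Qbar Qs k j.+1 i) r c * mxnth (Qs n x) c 0))).
  rewrite [X in \sum_(0 <= _ < X) _]expnSr sum_nat_mul_split.
  apply: eq_big_nat => i /andP[_ lt_i].
  rewrite big_distrr; apply: eq_big_nat => c /andP[_ lt_c].
  rewrite mxnth_Bmx ?expnSr ?ltn_mulD //.
  by rewrite divnMDl // divn_small // addn0 modnMDl modn_small // mulrCA.
rewrite sum_nat_indicator lt_x mxnth_QbarS ?ltn_pmod // digitsK.
by rewrite -def_k addnK.
Qed.

Lemma mxnth_commmx n0 m0 x y : (x < n0 * m0)%N ->
  mxnth (commmx R n0 m0) x y = ((x %/ m0 == y %% n0) && (x %% m0 == y %/ n0))%N%:R.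
Proof.
move=> lt_x; have m0_gt0 : (0 < m0)%N by case: m0 lt_x; rewrite ?muln0.
have lt_xm0 : (x %/ m0 < n0)%N by rewrite ltn_divLR.
transitivity (\sum_(0 <= i < m0) ((i == x %% m0)%N%:R *
   ((x %/ m0 == y %% n0) && (x %% m0 == y %/ n0))%N%:R : R)); last first.
  by rewrite sum_nat_indicator ltn_pmod.
rewrite /commmx mxnth_sum big_mkord; apply: eq_bigr => i _.
rewrite /kron !mxnth_tens mxnth_delta mxnth_scalar1 mxnth_delta !divn1 !modn1.
rewrite (divn_small lt_xm0) (modn_small lt_xm0) lt_xm0 eqxx !andbT [in RHS]eq_sym.
case: (eqVneq (x %% m0)%N i) => [<-|_]; last by rewrite !mulr0 mul0r.
by rewrite mulr1 mul1r -natrM mulnb andbC [(y %/ n0)%N == _]eq_sym.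
Qed.

Lemma mxnth_Cmx1 n (n_gt0 : (0 < n)%N) x y : (x < N ^ n)%N ->
  mxnth (Cmx R N n_gt0) x y =
  ((x %/ N ^ (n - 1) == y %% N) && (x %% N ^ (n - 1) == y %/ N))%N%:R.
Proof.
move=> lt_x; rewrite /Cmx mxnth_castmx mxnth_commmx ?expn1 //.
by rewrite mulnC dim_eq7.
Qed.

Lemma mxnth_Qbar_sum k m (m_gt0 : (0 < m)%N) x a : (a < N ^ m)%N ->
  mxnth (Qbar_sum Qs k m_gt0) x a =
  (x %/ N == a %/ N)%N%:R * mxnth (QbarL Qs k m (a %/ N)) (x %% N) (a %% N).
Proof.
move=> lt_a; have lt_aN : (a %/ N < N ^ (m - 1))%N by rewrite ltn_divLR // dim_eq7.
rewrite /Qbar_sum mxnth_castmx mxnth_sum.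
transitivity (\sum_(0 <= i < N ^ (m - 1)) ((i == a %/ N)%N%:R *
   ((x %/ N == a %/ N)%N%:R * mxnth (QbarL Qs k m (a %/ N)) (x %% N) (a %% N)))); last first.
  by rewrite sum_nat_indicator lt_aN.
rewrite big_mkord; apply: eq_bigr => i _.
rewrite /kron mxnth_tens /Emx mxnth_delta [in RHS]eq_sym.
case: (eqVneq (a %/ N)%N i) => [<-|_]; first by rewrite andbT mul1r.
by rewrite andbF !mul0r.
Qed.

Lemma mxnth_Cmx_mul_Qbar_sum k m (m_gt0 : (0 < m)%N) a a' :
  (a < N ^ m)%N -> (a' < N ^ m)%N ->
  mxnth (Cmx R N m_gt0 *m Qbar_sum Qs k m_gt0) a a' =
  (a %% N ^ (m - 1) == a' %/ N)%N%:R *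
  mxnth (QbarL Qs k m (a' %/ N)) (a %/ N ^ (m - 1)) (a' %% N).
Proof.
move=> lt_a lt_a'; set D := (N ^ (m - 1))%N.
have D_gt0 : (0 < D)%N by rewrite expn_gt0 N_gt0.
have eNm : (N ^ m = D * N)%N by rewrite dim_eq7.
have lt_aD : (a %/ D < N)%N by rewrite ltn_divLR // mulnC -eNm.
rewrite mxnth_mul.
transitivity (\sum_(0 <= x < N ^ m) ((x == a %% D * N + a %/ D)%N%:R *
   ((a %% D == a' %/ N)%N%:R * mxnth (QbarL Qs k m (a' %/ N)) (a %/ D) (a' %% N)))); last first.
  by rewrite sum_nat_indicator eNm ltn_mulD ?ltn_pmod.
apply: eq_big_nat => x /andP[_ lt_x].
rewrite mxnth_Cmx1 // mxnth_Qbar_sum // -/D (eqn_divmod _ _ _ _ lt_aD).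
rewrite andbC [(x %% N)%N == _]eq_sym.
case: (eqVneq (a %% D) (x %/ N))%N => [->|_]; last by rewrite !mul0r.
by case: (eqVneq (a %/ D) (x %% N))%N => [->|_]; rewrite ?andbF ?mul0r.
Qed.

Lemma mxnth_shiftmx k m (m_gt0 : (0 < m)%N) (le_mk : (m <= k)%N) a a' :
  (a < N ^ m)%N -> (a' < N ^ m)%N ->
  mxnth (shiftmx Qs le_mk) a a' =
  (a %% N ^ (m - 1) == a' %/ N)%N%:R *
  mxnth (QbarL Qs k m (a' %/ N)) (a %/ N ^ (m - 1)) (a' %% N).
Proof.
move=> lt_a lt_a'; set D := (N ^ (m - 1))%N; set W := (N ^ (k - m).+1)%N.
have eNm : (N ^ m = D * N)%N by rewrite dim_eq7.
have eNk : (N ^ k = D * W)%N by rewrite -expnD addnS -addSn subn1 prednK // subnKC.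
have lt_aD : (a %/ D < N)%N by rewrite ltn_divLR ?expn_gt0 ?N_gt0 // mulnC -eNm.
have lt_a'N : (a' %/ N < D)%N by rewrite ltn_divLR // -eNm.
have MC y : (y < N ^ k.+1)%N ->
    \sum_(0 <= x < N ^ k.+1)
      mxnth (castmx (erefl, dim_eq6 N le_mk) (Mprod R N m (k - m))) a x *
      mxnth (Cmx R N (isT : (0 < k.+1)%N)) x y
    = (a == (y %% N) * D + y %/ (N * W))%N%:R.
  move=> lt_y; have lt_yN : (y %/ N < N ^ k)%N by rewrite ltn_divLR // -expnSr.
  transitivity (\sum_(0 <= x < N ^ k.+1) ((x == (y %% N) * N ^ k + y %/ N)%N%:R *
                   (a == ((y %% N) * N ^ k + y %/ N) %/ W)%N%:R : R)).
    apply: eq_big_nat => x /andP[_ lt_x].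
    rewrite mxnth_castmx mxnth_Mprod ?subnKC // mxnth_Cmx1 // subn1 /=.
    rewrite [(x %/ _)%N == _]eq_sym -(eqn_divmod _ _ _ _ lt_yN) mulrC.
    by case: eqP => [->|_]; rewrite ?mul0r.
  rewrite sum_nat_indicator expnS ltn_mulD ?ltn_pmod // eNk mulnA.
  by rewrite divnMDl ?expn_gt0 ?N_gt0 // divnMA.
rewrite /shiftmx /QbarL subSn // mxnth_mul.
under eq_bigr => y _ do rewrite mxnth_mul mxnth_castmx.
have := sum_Bprod_low_digit _ _ _ _ _ (subnKC le_mk) lt_aD lt_a'.
rewrite [X in \sum_(0 <= _ < X) _ = _](dim_eq6 N le_mk) => <-.
rewrite mulr_sumr; apply: eq_big_nat => y /andP[_ lt_y].
rewrite MC //; have [eq_y|ne_y] := eqVneq (y %/ W)%N a'; last first.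
  by rewrite mxnth_Bprod_eq0 // !mulr0.
rewrite (mulnC N) divnMA eq_y (eqn_divmod _ _ _ _ lt_a'N).
by rewrite mulrA -natrM mulnb andbC.
Qed.

End ShiftMatrixEntries.

Theorem lemma1 (R : realFieldType) (N k m : nat)
  (hN : (1 <= N)%N) (hk : (1 <= k)%N) (hm : (1 <= m)%N) (hmk : (m <= k)%N)
  (Qs : nat -> nat -> 'cV[R]_N)
  (hQ : forall n l : nat, (m <= n <= k)%N -> (l < N ^ n)%N -> prob_vec (Qs n l)) :
  shiftmx Qs hmk = Cmx R N hm *m Qbar_sum Qs k hm.
Proof.
apply: eq_mx_mxnth => a a' lt_a lt_a'.
by rewrite mxnth_shiftmx // mxnth_Cmx_mul_Qbar_sum.
Qed.
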